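(* Let $\mathfrak g\xrightarrow{\mu}\mathfrak h$ be a crossed module of Lie algebras, $\phi:W\to V$ linear, $\rho$ a 2-representation on $\phi$, and $r>2$. Then on $C^{p,q}_r(\mathfrak g_1,\phi)$, $$\delta^{(r-1)}\circ\Delta+\Delta\circ\delta^{(r)}=\delta_{(1)}\circ\Delta_2-\Delta_2\circ\delta_{(1)}\qquad\text{and}\qquad\Delta^2=-(\Delta_2\circ\partial+\partial\circ\Delta_2).$$
   Context: Crossed module: Lie algebras $\mathfrak g,\mathfrak h$, Lie homomorphism $\mu$, action $\mathcal L:\mathfrak h\to\mathrm{Der}(\mathfrak g)$ with $\mu(\mathcal L_yx)=[y,\mu(x)]$, $\mathcal L_{\mu(x_0)}x_1=[x_0,x_1]$; $\mathfrak g\oplus_{\mathcal L}\mathfrak h$ has bracket $[(x_0,y_0),(x_1,y_1)]=([x_0,x_1]+\mathcal L_{y_0}x_1-\mathcal L_{y_1}x_0,[y_0,y_1])$. 2-representation: linear $\rho_0^1:\mathfrak h\to\mathfrak{gl}(W)$, $\rho_0^0:\mathfrak h\to\mathfrak{gl}(V)$, $\rho_1:\mathfrak g\to\mathrm{Hom}(V,W)$ with $\rho_0^1,\rho_0^0$ representations, $\phi\rho_0^1(y)=\rho_0^0(y)\phi$, $\rho_1([x_0,x_1])=\rho_1(x_0)\phi\rho_1(x_1)-\rho_1(x_1)\phi\rho_1(x_0)$, $\rho_0^0(\mu(x))=\phi\rho_1(x)$, $\rho_0^1(\mu(x))=\rho_1(x)\phi$, $\rho_1(\mathcal L_yx)=\rho_0^1(y)\rho_1(x)-\rho_1(x)\rho_0^0(y)$.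 $\mathfrak g_0=\mathfrak h$; for $p\ge1$, $\mathfrak g_p=\mathfrak g^p\oplus\mathfrak h$, elements $(x^0,\dots,x^{p-1};y)$, a Lie algebra via identification with composable strings $(a_0,\dots,a_{p-1})\in(\mathfrak g\oplus_{\mathcal L}\mathfrak h)^p$, $a_j=(x^j,y+\sum_{k>j}\mu(x^k))$, componentwise bracket. Face maps $\partial_k:\mathfrak g_{p+1}\to\mathfrak g_p$: $\partial_0(x^0,\dots,x^p;y)=(x^1,\dots,x^p;y)$, $\partial_k(\dots)=(x^0,\dots,x^{k-1}+x^k,\dots,x^p;y)$ ($0<k\le p$), $\partial_{p+1}(\dots)=(x^0,\dots,x^{p-1};y+\mu(x^p))$, componentwise on tuples; $\hat t_p(x^0,\dots,x^{p-1};y)=y+\sum\mu(x^j)$. $X(j),X(m,n)$: removal of entries. $C^{p,q}_r=\bigwedge^q\mathfrak g_p^*\otimes\bigwedge^r\mathfrak g^*\otimes W$ ($r\ge1$), $C^{p,q}_0=\bigwedge^q\mathfrak g_p^*\otimes V$, elements $\omega(\Xi;Z)$. $\delta^{(r)}\omega(\xi_0,\dots,\xi_q;Z)=\sum_j(-1)^j(\rho^{(r)}(\hat t_p(\xi_j))\omega(\Xi(j);\cdot))(Z)+\sum_{m<n}(-1)^{m+n}\omega([\xi_m,\xi_n],\Xi(m,n);Z)$, $(\rho^{(r)}(y)\beta)(x_1,\dots,x_r)=\rho_0^1(y)\beta(x_1,\dots,x_r)-\sum_k\beta(x_1,\dots,\mathcal L_yx_k,\dots,x_r)$. $\partial\omega(\Xi;Z)=\sum_{k=0}^{p+1}(-1)^k\omega(\partial_k\Xi;Z)$.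 $\delta_{(1)}\omega(\Xi;z_0,\dots,z_r)=\sum_k(-1)^k\rho_0^1(\mu(z_k))\omega(\Xi;Z(k))+\sum_{a<b}(-1)^{a+b}\omega(\Xi;[z_a,z_b],Z(a,b))$. $\Delta:C^{p,q}_r\to C^{p+1,q+1}_{r-1}$, $\Delta\omega(\xi_0,\dots,\xi_q;Z)=\sum_j(-1)^j\omega(\partial_0\Xi(j);x_j^0,Z)$ where $\xi_j=(x_j^0,\dots;y_j)$. $\Delta_2:C^{p,q}_r\to C^{p+1,q+2}_{r-2}$, $\Delta_2\omega(\xi_0,\dots,\xi_{q+1};Z)=\sum_{m<n}(-1)^{m+n}\omega(\partial_0\Xi(m,n);x_m^0,x_n^0,Z)$. *)

From HB Require Import structures.
From mathcomp Require Import all_boot all_order all_algebra.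
Set Implicit Arguments. Unset Strict Implicit. Unset Printing Implicit Defensive.
Import GRing.Theory.
Local Open Scope ring_scope.

Section Defs.
Variable K : fieldType.

Definition islin (A B : lmodType K) (f : A -> B) :=
  forall (a : K) (x y : A), f (a *: x + y) = a *: f x + f y.

Definition is_lie (A : lmodType K) (br : A -> A -> A) :=
  [/\ forall z, islin (fun x => br x z),
      forall x, islin (br x),
      forall x, br x x = 0 &
      forall x y z, br x (br y z) + br y (br z x) + br z (br x y) = 0].

Record crossed_module (G H : lmodType K) := CrossedModule {
  brG : G -> G -> G;
  brH : H -> H -> H;
  mu : G -> H;
  act : H -> G -> G;
  brG_lie : is_lie brG;
  brH_lie : is_lie brH;
  mu_lin : islin mu;
  mu_hom : forall x x', mu (brG x x') = brH (mu x) (mu x');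
  act_lin : forall x, islin (fun y => act y x);
  act_linx : forall y, islin (act y);
  act_der : forall y x x', act y (brG x x') = brG (act y x) x' + brG x (act y x');
  act_hom : forall y y' x, act (brH y y') x = act y (act y' x) - act y' (act y x);
  mu_equiv : forall y x, mu (act y x) = brH y (mu x);
  peiffer : forall x0 x1, act (mu x0) x1 = brG x0 x1
}.

Record two_rep (G H : lmodType K) (CM : crossed_module G H)
    (V W : lmodType K) (phi : W -> V) := TwoRep {
  rho01 : H -> W -> W;
  rho00 : H -> V -> V;
  rho1 : G -> V -> W;
  rho01_lin : forall w, islin (fun y => rho01 y w);
  rho01_linw : forall y, islin (rho01 y);
  rho00_lin : forall v, islin (fun y => rho00 y v);
  rho00_linv : forall y, islin (rho00 y);
  rho1_lin : forall v, islin (fun x => rho1 x v);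
  rho1_linv : forall x, islin (rho1 x);
  rho01_rep : forall y y' w,
    rho01 (brH CM y y') w = rho01 y (rho01 y' w) - rho01 y' (rho01 y w);
  rho00_rep : forall y y' v,
    rho00 (brH CM y y') v = rho00 y (rho00 y' v) - rho00 y' (rho00 y v);
  phi_equiv : forall y w, phi (rho01 y w) = rho00 y (phi w);
  rho1_br : forall x0 x1 v,
    rho1 (brG CM x0 x1) v = rho1 x0 (phi (rho1 x1 v)) - rho1 x1 (phi (rho1 x0 v));
  rho00_mu : forall x v, rho00 (mu CM x) v = phi (rho1 x v);
  rho01_mu : forall x w, rho01 (mu CM x) w = rho1 x (phi w);
  rho1_act : forall y x v,
    rho1 (act CM y x) v = rho01 y (rho1 x v) - rho1 x (rho00 y v)
}.

Section Ops.
Variables (G H W : lmodType K) (CM : crossed_module G H).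
Variable rho01 : H -> W -> W.

(* Elements (x^0,...,x^{p-1}; y) of g_p = g^p (+) h (g_0 = h); the length p is
   the size of the list gx. *)
Record gel := GEl { gx : seq G; gy : H }.
Definition gel0 : gel := GEl [::] 0.

Definition gadd (a b : gel) : gel :=
  GEl (mkseq (fun i => nth 0 (gx a) i + nth 0 (gx b) i) (size (gx a))) (gy a + gy b).
Definition gscale (c : K) (a : gel) : gel := GEl (map (fun x => c *: x) (gx a)) (c *: gy a).

(* Y_j = y + sum_{k>j} mu(x^k): second component of the j-th composable arrow *)
Definition Ycomp (a : gel) (j : nat) : H :=
  gy a + \sum_(j.+1 <= k < size (gx a)) mu CM (nth 0 (gx a) k).

(* Bracket of g_p via the identification with composable strings. *)
Definition gbr (a b : gel) : gel :=
  GEl (mkseq (fun j => brG CM (nth 0 (gx a) j) (nth 0 (gx b) j)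
                       + act CM (Ycomp a j) (nth 0 (gx b) j)
                       - act CM (Ycomp b j) (nth 0 (gx a) j)) (size (gx a)))
      (brH CM (gy a) (gy b)).

Definition that (a : gel) : H := gy a + \sum_(x <- gx a) mu CM x.

(* Face maps partial_k : g_{p+1} -> g_p, 0 <= k <= p+1. *)
Definition face0 (a : gel) : gel := GEl (behead (gx a)) (gy a).
Definition face (p k : nat) (a : gel) : gel :=
  if k == 0%N then face0 a
  else if (k <= p)%N then
    GEl (mkseq (fun i => if (i < k.-1)%N then nth 0 (gx a) i
                         else if i == k.-1 then nth 0 (gx a) i + nth 0 (gx a) i.+1
                         else nth 0 (gx a) i.+1) p) (gy a)
  else GEl (take p (gx a)) (gy a + mu CM (nth 0 (gx a) p)).

Definition rm (T : Type) (s : seq T) (j : nat) := take j s ++ drop j.+1 s.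
Definition rm2 (T : Type) (s : seq T) (m n : nat) := rm (rm s n) m.

Definition sgn (n : nat) : K := (-1) ^+ n.

(* Cochains: omega(Xi; Z) with Xi a list of q elements of g_p and Z a list of
   r elements of g; values in W (case r >= 1). *)
Definition cochain := seq gel -> seq G -> W.

Definition rhoR (y : H) (beta : seq G -> W) (Z : seq G) : W :=
  rho01 y (beta Z) - \sum_(k < size Z) beta (set_nth 0 Z k (act CM y (nth 0 Z k))).

Definition delta (om : cochain) : cochain := fun Xi Z =>
  \sum_(j < size Xi) sgn j *: rhoR (that (nth gel0 Xi j)) (om (rm Xi j)) Z
  + \sum_(m < size Xi) \sum_(n < size Xi | (m < n)%N)
      sgn (m + n) *: om (gbr (nth gel0 Xi m) (nth gel0 Xi n) :: rm2 Xi m n) Z.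

(* partial on cochains C^{p,q}_r -> C^{p+1,q}_r *)
Definition dpartial (p : nat) (om : cochain) : cochain := fun Xi Z =>
  \sum_(k < p.+2) sgn k *: om (map (face p k) Xi) Z.

Definition delta1 (om : cochain) : cochain := fun Xi Z =>
  \sum_(k < size Z) sgn k *: rho01 (mu CM (nth 0 Z k)) (om Xi (rm Z k))
  + \sum_(a < size Z) \sum_(b < size Z | (a < b)%N)
      sgn (a + b) *: om Xi (brG CM (nth 0 Z a) (nth 0 Z b) :: rm2 Z a b).

Definition Delta (om : cochain) : cochain := fun Xi Z =>
  \sum_(j < size Xi) sgn j *:
     om (map face0 (rm Xi j)) (nth 0 (gx (nth gel0 Xi j)) 0 :: Z).

Definition Delta2 (om : cochain) : cochain := fun Xi Z =>
  \sum_(m < size Xi) \sum_(n < size Xi | (m < n)%N) sgn (m + n) *: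
     om (map face0 (rm2 Xi m n))
        (nth 0 (gx (nth gel0 Xi m)) 0 :: nth 0 (gx (nth gel0 Xi n)) 0 :: Z).

Definition gel_size (p : nat) (a : gel) : bool := size (gx a) == p.

Definition is_cochain (p q r : nat) (om : cochain) : Prop :=
  forall (Xi : seq gel) (Z : seq G),
    size Xi = q -> all (gel_size p) Xi -> size Z = r ->
    [/\ forall (j : nat) (c : K) (a b : gel), (j < q)%N ->
          gel_size p a -> gel_size p b ->
          om (set_nth gel0 Xi j (gadd (gscale c a) b)) Z
          = c *: om (set_nth gel0 Xi j a) Z + om (set_nth gel0 Xi j b) Z,
        forall (k : nat) (c : K) (x x' : G), (k < r)%N ->
          om Xi (set_nth 0 Z k (c *: x + x'))
          = c *: om Xi (set_nth 0 Z k x) + om Xi (set_nth 0 Z k x'),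
        forall i j : nat, (i < j < q)%N -> nth gel0 Xi i = nth gel0 Xi j -> om Xi Z = 0 &
        forall i j : nat, (i < j < r)%N -> nth 0 Z i = nth 0 Z j -> om Xi Z = 0].

End Ops.
End Defs.

(* Both identities are checked pair by pair.  In each left-hand side the summands
   are indexed by the two positions j <> k of Xi whose entries are consumed by the
   two operators; regrouping them over unordered pairs m < n gives the indexing of
   Delta_2.

   For Delta^2, the faces partial_k with k >= 2 commute with partial_0 and
   telescope; the faces partial_0 and partial_1 leave, by biadditivity of omega in
   its g-slots, exactly the two cross terms of Delta^2, up to a transposition.

   For delta Delta + Delta delta, the summands containing the bracket of
   partial_0 xi_m and partial_0 xi_n cancel in triples.  Writing
   t(xi) = t(partial_0 xi) + mu(x^0), the rho^(r)(t(partial_0 xi)) parts cancel as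
   well, and a pair (m, n) leaves omega([x_m^0, x_n^0], ...) together with
   rho^(r)(mu x_n^0) - rho^(r)(mu x_m^0) terms.  The Peiffer identity
   L_(mu x) = [x, -] shows that delta_(1) Delta_2 - Delta_2 delta_(1) produces the
   same expression. *)

From Pilot Require Import Defs.
From HB Require Import structures.
From mathcomp Require Import all_boot all_order all_algebra.
From mathcomp Require Import zify.
Set Implicit Arguments. Unset Strict Implicit. Unset Printing Implicit Defensive.
Import GRing.Theory.
Local Open Scope ring_scope.

Section Removal.
Variable T : Type.
Implicit Types (s : seq T) (d x : T).

Lemma rm0_cons x s : rm (x :: s) 0 = s.
Proof. by rewrite /rm /= drop0. Qed.

Lemma rmS_cons x s j : rm (x :: s) j.+1 = x :: rm s j.
Proof. by []. Qed.

Lemma rm_nil j : rm [::] j = [::] :> seq T.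
Proof. by case: j. Qed.

Lemma nth_rm d s j i : nth d (rm s j) i = nth d s (bump j i).
Proof.
elim: s j i => [|x s IH] j i; first by rewrite rm_nil !nth_nil.
case: j => [|j]; first by rewrite rm0_cons.
by case: i => [|i] //; rewrite rmS_cons bumpS /= IH.
Qed.

Lemma size_rm s j : (j < size s)%N -> size (rm s j) = (size s).-1.
Proof. by move=> lt_js; rewrite size_cat size_take size_drop lt_js; lia. Qed.

Lemma map_rm (U : Type) (f : T -> U) s j : map f (rm s j) = rm (map f s) j.
Proof. by rewrite /rm map_cat map_take map_drop. Qed.

Lemma all_rm (P : pred T) s j : all P s -> all P (rm s j).
Proof.
elim: s j => [|x s IH] [|j]; rewrite ?rm_nil ?rm0_cons ?rmS_cons //=.
  by case/andP.
by case/andP => Px Ps; rewrite Px IH.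
Qed.

Lemma rm_rm s j i : (j <= i)%N -> rm (rm s j) i = rm (rm s i.+1) j.
Proof.
elim: s j i => [|x s IH] j i; first by rewrite !rm_nil.
case: j => [|j] le_ji; first by rewrite rm0_cons rmS_cons rm0_cons.
by case: i le_ji => [|i] // le_ji; rewrite !rmS_cons IH.
Qed.

Lemma rm2_unbumpl s m n : (m < n)%N -> rm (rm s n) (unbump n m) = rm2 s m n.
Proof. by move=> lt_mn; rewrite /unbump ltnNge (ltnW lt_mn) subn0. Qed.

Lemma rm2_unbumpr s m n : (m < n)%N -> rm (rm s m) (unbump m n) = rm2 s m n.
Proof.
move=> lt_mn; rewrite /unbump lt_mn subn1 rm_rm ?prednK //; first exact: leq_ltn_trans lt_mn.
by rewrite -ltnS prednK //; exact: leq_ltn_trans lt_mn.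
Qed.

Lemma size_rm2 s m n : (m < n)%N -> (n < size s)%N -> size (rm2 s m n) = (size s).-2.
Proof.
move=> lt_mn lt_ns; have size_rm_n := size_rm lt_ns.
by rewrite /rm2 size_rm size_rm_n //; lia.
Qed.

Lemma map_rm2 (U : Type) (f : T -> U) s m n : map f (rm2 s m n) = rm2 (map f s) m n.
Proof. by rewrite /rm2 !map_rm. Qed.

Lemma all_rm2 (P : pred T) s m n : all P s -> all P (rm2 s m n).
Proof. by move=> Ps; apply/all_rm/all_rm. Qed.

Lemma rm_rm2_bump d s i m n : (i < size s)%N -> (m < n)%N -> (n < (size s).-1)%N ->
  rm (rm2 s (bump i m) (bump i n)) (unbump (bump i m) (unbump (bump i n) i))
  = rm2 (rm s i) m n.
Proof.
move=> lt_is lt_mn lt_ns; apply: (@eq_from_nth _ d).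
  have lt_bmn : (bump i m < bump i n)%N by rewrite /bump; lia.
  have lt_bn : (bump i n < size s)%N by rewrite /bump; lia.
  have size_rm_i : size (rm s i) = (size s).-1 by rewrite size_rm.
  rewrite size_rm size_rm2 // ?size_rm2 ?size_rm_i //; rewrite /bump /unbump; lia.
by move=> k _; rewrite /rm2 !nth_rm; congr nth; rewrite /bump /unbump; lia.
Qed.

Lemma rm_set_nth d s j x : (j < size s)%N -> rm (set_nth d s j x) j = rm s j.
Proof.
elim: s j => [|y s IH] [|j] // lt_js.
by rewrite /= !rmS_cons IH.
Qed.

Lemma set_nth_cat_size d s1 s2 x y :
  set_nth d (s1 ++ x :: s2) (size s1) y = s1 ++ y :: s2.
Proof. by elim: s1 => //= z s1 ->. Qed.

End Removal.

Lemma eq_map_all (T U : Type) (P : pred T) (f g : T -> U) s :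
  all P s -> (forall x, P x -> f x = g x) -> map f s = map g s.
Proof. by elim: s => //= x s IH /andP[Px Ps] eq_fg; rewrite eq_fg // IH. Qed.

Lemma eq_big_nat_cond (R : Type) (idx : R) (op : R -> R -> R) m n (P : pred nat)
    (F1 F2 : nat -> R) :
  (forall i, (m <= i < n)%N -> P i -> F1 i = F2 i) ->
  \big[op/idx]_(m <= i < n | P i) F1 i = \big[op/idx]_(m <= i < n | P i) F2 i.
Proof.
move=> eq_F; rewrite big_nat_cond [RHS]big_nat_cond.
by apply: eq_bigr => i /andP[/eq_F].
Qed.

Lemma sum_pairs_recl (V : nmodType) n (F : nat -> nat -> V) :
  \sum_(0 <= a < n.+1) \sum_(0 <= b < n.+1 | (a < b)%N) F a b
  = \sum_(0 <= b < n) F 0%N b.+1 + \sum_(0 <= a < n) \sum_(0 <= b < n | (a < b)%N) F a.+1 b.+1.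
Proof.
rewrite big_nat_recl //; congr (_ + _).
  by rewrite big_mkcond big_nat_recl //= add0r.
apply: eq_bigr => a _; rewrite big_mkcond big_nat_recl //= add0r.
by rewrite [RHS]big_mkcond.
Qed.

Lemma sum_bump (V : zmodType) N i (F : nat -> V) : (i <= N)%N ->
  \sum_(0 <= k < N) F (bump i k) = \sum_(0 <= k < N.+1) if k != i then F k else 0.
Proof.
move=> le_iN; pose i0 := Ordinal (le_iN : i < N.+1)%N.
apply: (@addrI _ (F i)); rewrite -big_mkcond !big_mkord.
rewrite -(bigD1 i0 (P := xpredT) (F := fun k : 'I_N.+1 => F k)) //.
by rewrite (bigD1_ord i0).
Qed.

Section SignedSums.
Variables (K : fieldType) (V : lmodType K).
Local Notation sg := (sgn K).

Lemma sgn0 : sg 0 = 1.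
Proof. by []. Qed.

Lemma sgnS n : sg n.+1 = - sg n.
Proof. by rewrite /sgn exprS mulN1r. Qed.

Lemma sgnD m n : sg (m + n) = sg m * sg n.
Proof. by rewrite /sgn exprD. Qed.

Lemma sgn_mod2 m n : (m = n %[mod 2])%N -> sg m = sg n.
Proof. by move=> eq_mn; rewrite /sgn -signr_odd -[RHS]signr_odd -!modn2 eq_mn. Qed.

Lemma exchange_sum_pairs (a : nat -> K) (b : nat -> nat -> K)
    (F : nat -> nat -> nat -> V) n1 n2 :
  \sum_(0 <= k < n1) a k *:
     \sum_(0 <= m < n2) \sum_(0 <= n < n2 | (m < n)%N) b m n *: F k m n
  = \sum_(0 <= m < n2) \sum_(0 <= n < n2 | (m < n)%N) b m n *:
     \sum_(0 <= k < n1) a k *: F k m n.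
Proof.
transitivity (\sum_(0 <= k < n1) \sum_(0 <= m < n2) \sum_(0 <= n < n2 | (m < n)%N)
                a k *: (b m n *: F k m n)).
  by apply: eq_bigr => k _; rewrite scaler_sumr; apply: eq_bigr => m _; rewrite scaler_sumr.
rewrite exchange_big_nat; apply: eq_bigr => m _; rewrite exchange_big_nat.
apply: eq_bigr => n _; rewrite scaler_sumr; apply: eq_bigr => k _.
by rewrite !scalerA mulrC.
Qed.

Lemma sum_sgn_bump N (F : nat -> nat -> V) :
  \sum_(0 <= j < N.+1) sg j *: \sum_(0 <= i < N) sg i *: F j (bump j i)
  = \sum_(0 <= m < N.+1) \sum_(0 <= n < N.+1 | (m < n)%N) sg (m + n) *: (F n m - F m n).
Proof.
have expand j : (j < N.+1)%N ->
    sg j *: \sum_(0 <= i < N) sg i *: F j (bump j i)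
    = \sum_(0 <= k < N.+1)
        if k != j then sg j *: ((if (k < j)%N then sg k else - sg k) *: F j k) else 0.
  move=> lt_jN; rewrite scaler_sumr -sum_bump //.
  apply: eq_bigr => i _; congr (_ *: (_ *: _)); rewrite /bump.
  by case: (leqP j i) => [le_ji|->]; rewrite ?add1n ?ltnNge ?(leqW le_ji) ?sgnS ?opprK.
rewrite big_nat_cond (eq_bigr _ (fun j lt_j => expand j (andP lt_j).1)) -big_nat_cond.
under [RHS]eq_bigr => m _ do rewrite big_mkcond /=.
transitivity (\sum_(0 <= m < N.+1) \sum_(0 <= n < N.+1) (if (m < n)%N then sg (m + n) *: F n m else 0)
  - \sum_(0 <= m < N.+1) \sum_(0 <= n < N.+1) (if (m < n)%N then sg (m + n) *: F m n else 0)).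
  rewrite [X in X - _]exchange_big_nat -sumrB; apply: eq_bigr => j _.
  rewrite -sumrB; apply: eq_bigr => k _.
  case: (ltngtP k j) => lt_kj /=.
  - by rewrite subr0 scalerA -sgnD addnC.
  - by rewrite sub0r scalerA mulrN -sgnD scaleNr.
  - by rewrite subrr.
rewrite -sumrB; apply: eq_bigr => m _; rewrite -sumrB; apply: eq_bigr => n _.
by case: ifP; rewrite ?scalerBr ?subr0.
Qed.

Lemma sum_bump_bump N m n (F : nat -> V) : (m < n)%N -> (n <= N.+1)%N ->
  \sum_(0 <= i < N) F (bump n (bump m i))
  = \sum_(0 <= k < N.+2) if (k != n) && (k != m) then F k else 0.
Proof.
move=> lt_mn le_nN; rewrite (sum_bump (fun i => F (bump n i))); last by lia.
transitivity (\sum_(0 <= k < N.+1)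
    (fun k => if unbump n k != m then F k else 0) (bump n k)).
  by apply: eq_bigr => k _; rewrite /= bumpK.
rewrite (sum_bump (fun k => if unbump n k != m then F k else 0)) //.
apply: eq_bigr => k _.
case: eqP => [->|/eqP ne_kn] //=; congr (if _ then _ else _).
by apply/idP/idP; rewrite /unbump; apply: contraNN => /eqP eq_km; apply/eqP; move: ne_kn; lia.
Qed.

Lemma sum_pairs_bump N i (F : nat -> nat -> V) : (i <= N.+1)%N ->
  \sum_(0 <= m < N.+1) \sum_(0 <= n < N.+1 | (m < n)%N) F (bump i m) (bump i n)
  = \sum_(0 <= m < N.+2) \sum_(0 <= n < N.+2)
       if [&& m != i, n != i & (m < n)%N] then F m n else 0.
Proof.
move=> le_iN; under eq_bigr => m _ do rewrite big_mkcond /=.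
transitivity (\sum_(0 <= m < N.+1) (fun m => \sum_(0 <= n < N.+2)
     if n != i then (if (m < n)%N then F m n else 0) else 0) (bump i m)).
  apply: eq_bigr => m _ /=.
  rewrite -(sum_bump (fun n => if (bump i m < n)%N then F (bump i m) n else 0)) //.
  by apply: eq_bigr => n _; rewrite /= !ltnNge leq_bump2.
rewrite (sum_bump (fun m => \sum_(0 <= n < N.+2)
  if n != i then (if (m < n)%N then F m n else 0) else 0)) //.
apply: eq_bigr => m _.
case: eqP => [->|/eqP ne_mi] /=; first by rewrite big1.
by apply: eq_bigr => n _; case: (n != i); case: (m < n)%N.
Qed.

Lemma sgn_unbump_cancel m n k : (m < n)%N -> k != m -> k != n ->
  sg (m + n) * sg (unbump m (unbump n k)).+1 + sg k * sg (unbump k m + unbump k n) = 0.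
Proof.
move=> lt_mn /eqP ne_km /eqP ne_kn; rewrite -!sgnD -(opprK (sg (k + _))) -sgnS.
apply/eqP; rewrite subr_eq0; apply/eqP/sgn_mod2; rewrite /unbump.
case: (ltnP n k) => a; case: (ltnP m (k - _)) => b; case: (ltnP k m) => c;
  case: (ltnP k n) => d; move: lt_mn ne_km ne_kn a b c d; clear; rewrite /=; lia.
Qed.

(* Each triple of distinct positions occurs once in each sum, with opposite signs. *)
Lemma sum_sgn_triples_cancel N (F : nat -> nat -> nat -> V) :
  \sum_(0 <= m < N.+2) \sum_(0 <= n < N.+2 | (m < n)%N) sg (m + n) *:
      \sum_(0 <= i < N) sg i.+1 *: F m n (bump n (bump m i))
  + \sum_(0 <= k < N.+2) sg k *:
      \sum_(0 <= m < N.+1) \sum_(0 <= n < N.+1 | (m < n)%N)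
         sg (m + n) *: F (bump k m) (bump k n) k = 0.
Proof.
pose XA m n k := if (m < n)%N && (k != n) && (k != m) then
    sg (m + n) *: (sg (unbump m (unbump n k)).+1 *: F m n k) else 0.
pose XB m n k := sg k *: (if [&& m != k, n != k & (m < n)%N] then
    sg (unbump k m + unbump k n) *: F m n k else 0).
have -> : \sum_(0 <= m < N.+2) \sum_(0 <= n < N.+2 | (m < n)%N) sg (m + n) *:
      \sum_(0 <= i < N) sg i.+1 *: F m n (bump n (bump m i))
    = \sum_(0 <= m < N.+2) \sum_(0 <= n < N.+2) \sum_(0 <= k < N.+2) XA m n k.
  apply: eq_bigr => m _; rewrite big_mkcond; apply: eq_big_nat => n /andP[_ lt_nN].
  rewrite /XA; case: ifP => lt_mn /=; last by rewrite big1.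
  transitivity (sg (m + n) *: \sum_(0 <= i < N)
     (fun k => sg (unbump m (unbump n k)).+1 *: F m n k) (bump n (bump m i))).
    by congr (_ *: _); apply: eq_bigr => i _; rewrite /= !bumpK.
  rewrite (sum_bump_bump (fun k => sg (unbump m (unbump n k)).+1 *: F m n k)) //.
  by rewrite scaler_sumr; apply: eq_bigr => k _; case: ifP; rewrite ?scaler0.
have -> : \sum_(0 <= k < N.+2) sg k *:
      \sum_(0 <= m < N.+1) \sum_(0 <= n < N.+1 | (m < n)%N)
         sg (m + n) *: F (bump k m) (bump k n) k
    = \sum_(0 <= m < N.+2) \sum_(0 <= n < N.+2) \sum_(0 <= k < N.+2) XB m n k.
  transitivity (\sum_(0 <= k < N.+2) \sum_(0 <= m < N.+2) \sum_(0 <= n < N.+2) XB m n k); last first.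
    by rewrite exchange_big_nat; apply: eq_bigr => m _; rewrite exchange_big_nat.
  apply: eq_big_nat => k /andP[_ lt_kN].
  transitivity (sg k *: \sum_(0 <= m < N.+1) \sum_(0 <= n < N.+1 | (m < n)%N)
     (fun a b => sg (unbump k a + unbump k b) *: F a b k) (bump k m) (bump k n)).
    by congr (_ *: _); apply: eq_bigr => a _; apply: eq_bigr => b _; rewrite /= !bumpK.
  rewrite (sum_pairs_bump (fun a b => sg (unbump k a + unbump k b) *: F a b k)) //.
  by rewrite scaler_sumr; apply: eq_bigr => m _; rewrite scaler_sumr.
rewrite -big_split; apply: big1_seq => m _; rewrite -big_split; apply: big1_seq => n _.
rewrite -big_split; apply: big1_seq => k _; rewrite /XA /XB.
case: (ltnP m n) => lt_mn /=; last by rewrite !andbF scaler0 addr0.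
case: (eqVneq k n) => [->|ne_kn]; first by rewrite /= andbF scaler0 add0r.
case: (eqVneq k m) => [->|ne_km]; first by rewrite /= ?andbF ?scaler0 ?add0r ?addr0.
have ne_mk : m != k by rewrite eq_sym.
have ne_nk : n != k by rewrite eq_sym.
rewrite ?ne_kn ?ne_km ?ne_mk ?ne_nk /= !scalerA -scalerDl.
by rewrite (sgn_unbump_cancel lt_mn ne_km ne_kn) scale0r.
Qed.

Lemma sum_sgn_shift_cancel N (F G : nat -> V) :
  (forall k, (k < N)%N -> G k.+2 = F k.+1) ->
  \sum_(0 <= k < N.+1) sg k *: F k + \sum_(0 <= k < N.+2) sg k *: G k = F 0%N + G 0%N - G 1%N.
Proof.
move=> eqGF; rewrite big_nat_recl // [X in _ + X]big_nat_recl //.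
rewrite [X in _ + (_ + X)]big_nat_recl //.
have cancel : \sum_(0 <= k < N) sg k.+1 *: F k.+1 + \sum_(0 <= k < N) sg k.+2 *: G k.+2 = 0.
  rewrite -big_split big1_seq // => k; rewrite mem_index_iota => /andP[_ lt_kN].
  by rewrite eqGF // [sg k.+2]sgnS scaleNr; exact: subrr.
rewrite sgnS sgn0 !scale1r scaleN1r addrACA [X in _ + X]addrCA addrA.
by rewrite cancel addr0.
Qed.

End SignedSums.

Section LinearMaps.
Variables (K : fieldType) (A B : lmodType K) (f : A -> B).
Hypothesis f_lin : islin f.

Lemma islinD x y : f (x + y) = f x + f y.
Proof. by have := f_lin 1 x y; rewrite !scale1r. Qed.

Lemma islin0 : f 0 = 0.
Proof. by apply: (@addrI _ (f 0)); rewrite -islinD !addr0. Qed.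

Lemma islinZ c x : f (c *: x) = c *: f x.
Proof. by have := f_lin c x 0; rewrite !addr0 islin0 addr0. Qed.

Lemma islin_sum (I : Type) (s : seq I) (P : pred I) (F : I -> A) :
  f (\sum_(i <- s | P i) F i) = \sum_(i <- s | P i) f (F i).
Proof. by elim/big_rec2: _ => [|i x y _ <-]; rewrite ?islin0 ?islinD. Qed.

End LinearMaps.

(** * Additive alternating forms *)

Section AlternatingForms.
Variables (K : fieldType) (G W : lmodType K).
Local Notation sg := (sgn K).

Definition is_altform (r : nat) (f : seq G -> W) : Prop :=
  forall Z, size Z = r ->
    (forall k x x', (k < r)%N ->
       f (set_nth 0 Z k (x + x')) = f (set_nth 0 Z k x) + f (set_nth 0 Z k x'))
    /\ (forall i j, (i < j < r)%N -> nth 0 Z i = nth 0 Z j -> f Z = 0).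

Lemma altform_cons r f x : is_altform r.+1 f -> is_altform r (fun Z => f (x :: Z)).
Proof.
move=> f_alt Z size_Z; have [f_add f_rep] := f_alt (x :: Z) (congr1 S size_Z).
by split=> [k y y'|i j lt_ijr]; [exact: (f_add k.+1) | exact: (f_rep i.+1 j.+1)].
Qed.

Variables (r : nat) (f : seq G -> W).
Hypothesis f_alt : is_altform r f.
Implicit Types (P M : seq G) (x y u v : G).

Lemma altformD P M x y : size (P ++ x :: M) = r ->
  f (P ++ (x + y) :: M) = f (P ++ x :: M) + f (P ++ y :: M).
Proof.
move=> size_r; have [f_add _] := f_alt size_r.
have lt_Pr : (size P < r)%N by rewrite -size_r size_cat /= addnS ltnS leq_addr.
by have := f_add _ x y lt_Pr; rewrite !set_nth_cat_size.
Qed.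

Lemma altformB P M x y : size (P ++ x :: M) = r ->
  f (P ++ (x - y) :: M) = f (P ++ x :: M) - f (P ++ y :: M).
Proof.
move=> size_r; apply/eqP; rewrite eq_sym subr_eq -altformD ?subrK //.
by rewrite -size_r !size_cat.
Qed.

Lemma altform_repeat P M x : size (P ++ x :: x :: M) = r -> f (P ++ x :: x :: M) = 0.
Proof.
move=> size_r; have [_ f_rep] := f_alt size_r.
apply: (f_rep (size P) (size P).+1); last by rewrite !nth_cat ltnn ltnNge leqnSn /= subnn subSnn.
by rewrite ltnSn -size_r size_cat /= !addnS !ltnS leq_addr.
Qed.

Lemma altform_swap P M u v : size (P ++ u :: v :: M) = r ->
  f (P ++ u :: v :: M) = - f (P ++ v :: u :: M).
Proof.
move=> size_r; have size_r' a b : size (P ++ a :: b :: M) = r by rewrite -size_r !size_cat.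
have addD2 a b c : f (P ++ a :: (b + c) :: M) = f (P ++ a :: b :: M) + f (P ++ a :: c :: M).
  by have := @altformD (rcons P a) M b c; rewrite -!cats1 -!catA; apply; exact: size_r'.
have := altform_repeat (size_r' (u + v) (u + v)).
rewrite altformD // !addD2 !altform_repeat // add0r addr0 => /eqP.
by rewrite addr_eq0 => /eqP.
Qed.

Lemma altform_move P M k : size (P ++ M) = r -> (k < size M)%N ->
  f (P ++ nth 0 M k :: rm M k) = sg k *: f (P ++ M).
Proof.
elim: k P M => [|k IH] P [|x M] size_r lt_kM //; first by rewrite rm0_cons scale1r.
have lt_kM' : (k < size M)%N by [].
rewrite rmS_cons /= altform_swap; last first.
  by rewrite -size_r !size_cat /= size_rm // prednK //; apply: leq_ltn_trans lt_kM'.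
rewrite -cat_rcons IH -?cat_rcons ?sgnS ?scaleNr //.
by rewrite -size_r -cats1 -catA.
Qed.

Lemma altform_move_set x w Z c : size (x :: Z) = r -> (c < size Z)%N ->
  f (w :: x :: rm Z c) = sg c.+1 *: f (x :: set_nth 0 Z c w).
Proof.
move=> size_r lt_cZ; have size_set := size_set_nth 0 Z c w.
rewrite (maxn_idPr lt_cZ) in size_set.
have := @altform_move [::] (x :: set_nth 0 Z c w) c.+1; rewrite /= size_set.
by rewrite nth_set_nth /= eqxx rmS_cons rm_set_nth //; apply.
Qed.

Lemma altform_rotate x y z M : size [:: x, y, z & M] = r ->
  f [:: z, x, y & M] = f [:: x, y, z & M].
Proof.
move=> size_r; have := @altform_move [::] [:: x, y, z & M] 2 size_r isT.
by rewrite /= rmS_cons rmS_cons rm0_cons /sgn expr2 mulrNN mulr1 scale1r.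
Qed.

Lemma altform_cross a a' b b' Z : size (a :: b :: Z) = r ->
  f (a :: b :: Z) + f (a' :: b' :: Z) - f ((a + a') :: (b + b') :: Z)
  = - (f (a :: b' :: Z) + f (a' :: b :: Z)).
Proof.
move=> size_r; rewrite (altformD (P := [::])) //.
rewrite (altformD (P := [:: a])) // (altformD (P := [:: a'])) //.
by rewrite [f (a' :: b :: Z) + _]addrC addrACA opprD addrA addrN add0r.
Qed.

End AlternatingForms.

(** * Composable strings *)

(* The implicit arguments of [face0] are not maximal; this lets [map face0] typecheck. *)
Local Notation face0 := (@face0 _ _ _).
Local Notation gx0 a := (nth 0 (gx a) 0).
Local Notation gx1 a := (nth 0 (gx a) 1).

Section StringAlgebra.
Variables (K : fieldType) (G H : lmodType K) (CM : crossed_module G H).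
Local Notation gel := (gel G H).
Implicit Types (a b : gel) (p : nat).

Lemma gel_size_face0 p a : gel_size p.+1 a -> gel_size p (face0 a).
Proof. by case: a => [xs y]; rewrite /gel_size /= size_behead => /eqP ->. Qed.

Lemma that_face0 a : (0 < size (gx a))%N ->
  that CM a = that CM (face0 a) + mu CM (gx0 a).
Proof. by case: a => [[|x xs] y] //= _; rewrite /that /= big_cons addrAC addrA. Qed.

Lemma Ycomp0 a : Ycomp CM a 0 = that CM (face0 a).
Proof.
case: a => [[|x xs] y]; rewrite /Ycomp /that /=; first by rewrite big_geq // big_nil.
by congr (_ + _); rewrite [RHS](big_nth 0) big_add1.
Qed.

Lemma YcompS a j : Ycomp CM a j.+1 = Ycomp CM (face0 a) j.
Proof.
case: a => [[|x xs] y]; rewrite /Ycomp /=; first by rewrite !big_geq.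
by rewrite big_add1.
Qed.

Lemma face0_gbr a b : face0 (gbr CM a b) = gbr CM (face0 a) (face0 b).
Proof.
case: a b => [[|x xs] ya] [xb yb]; rewrite /face0 /gbr //=; congr GEl.
rewrite /mkseq -(addn0 1%N) iotaDl -map_comp; apply: eq_map => j /=.
by rewrite add1n !YcompS /= !nth_behead.
Qed.

Lemma gx0_gbr a b : (0 < size (gx a))%N ->
  gx0 (gbr CM a b) = brG CM (gx0 a) (gx0 b)
     + act CM (that CM (face0 a)) (gx0 b) - act CM (that CM (face0 b)) (gx0 a).
Proof. by move=> gt0_a; rewrite /gbr /= nth_mkseq // !Ycomp0. Qed.

Lemma face0_face1 p a : gel_size p.+2 a -> face0 (face CM p.+1 1 a) = face0 (face0 a).
Proof.
case: a => [xs y]; rewrite /gel_size /= => /eqP size_xs; rewrite /face /face0 /=; congr GEl.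
apply: (@eq_from_nth _ 0); first by rewrite size_map size_iota !size_behead size_xs.
move=> i; rewrite size_map size_iota => lt_ip.
by rewrite (nth_map 0) ?size_iota // nth_iota // add1n !nth_behead.
Qed.

Lemma face0_faceS p k a : gel_size p.+2 a -> (1 <= k <= p.+1)%N ->
  face0 (face CM p.+1 k.+1 a) = face CM p k (face0 a).
Proof.
case: a => [xs y]; rewrite /gel_size /= => /eqP size_xs; case: k => [|k] //= le_kp.
case: (ltnP k.+1 p.+1) => [lt_kp|le_pk].
  rewrite /face /= lt_kp (lt_kp : k.+1 <= p)%N /face0 /=; congr GEl.
  apply: (@eq_from_nth _ 0); first by rewrite size_map size_iota size_mkseq.
  move=> i; rewrite size_map size_iota => lt_ip.
  by rewrite (nth_map 0) ?size_iota // nth_iota // add1n nth_mkseq // !nth_behead ltnS eqSS.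
have -> : k = p by lia.
rewrite /face /= !ltnn /face0 /=; congr GEl; last by rewrite nth_behead.
by case: xs size_xs => [|x [|x' xs]].
Qed.

Lemma gx0_face p k a : gel_size p.+2 a -> (k <= p.+2)%N ->
  gx0 (face CM p.+1 k a) =
  if k == 0%N then gx1 a else if k == 1%N then gx0 a + gx1 a else gx0 a.
Proof.
case: a => [xs y]; rewrite /gel_size /= => /eqP size_xs.
case: k => [|[|k]] le_kp; try by rewrite /face /= ?nth_behead.
case: (ltnP k.+1 p.+1) => [lt_kp|le_pk]; first by rewrite /face /= lt_kp.
have -> : k = p by lia.
by rewrite /face /= !ltnn /= nth_take.
Qed.

End StringAlgebra.

Section FormOperators.
Variables (K : fieldType) (G H W : lmodType K) (CM : crossed_module G H).
Variable rho01 : H -> W -> W.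
Hypothesis rho01_linw : forall y, islin (rho01 y).
Local Notation sg := (sgn K).
Local Notation rhoR := (rhoR CM rho01).
Implicit Types (f : seq G -> W) (Z : seq G) (y : H).

Definition delta1f f Z : W :=
  \sum_(0 <= k < size Z) sg k *: rho01 (mu CM (nth 0 Z k)) (f (rm Z k))
  + \sum_(0 <= a < size Z) \sum_(0 <= b < size Z | (a < b)%N)
      sg (a + b) *: f (brG CM (nth 0 Z a) (nth 0 Z b) :: rm2 Z a b).

Lemma delta1E om Xi Z : delta1 CM rho01 om Xi Z = delta1f (om Xi) Z.
Proof.
rewrite /delta1 /delta1f big_mkord; congr (_ + _).
by rewrite big_mkord; apply: eq_bigr => a _; rewrite big_mkord.
Qed.

Lemma rhoRE y f Z :
  rhoR y f Z = rho01 y (f Z) - \sum_(0 <= k < size Z) f (set_nth 0 Z k (act CM y (nth 0 Z k))).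
Proof. by rewrite /Defs.rhoR big_mkord. Qed.

Lemma rhoR_sum (I : Type) (s : seq I) (P : pred I) (F : I -> seq G -> W) y Z :
  rhoR y (fun Z' => \sum_(i <- s | P i) F i Z') Z = \sum_(i <- s | P i) rhoR y (F i) Z.
Proof.
rewrite rhoRE /= islin_sum // exchange_big -sumrB.
by apply: eq_bigr => i _; rewrite rhoRE.
Qed.

Lemma rhoRZ c y f Z : rhoR y (fun Z' => c *: f Z') Z = c *: rhoR y f Z.
Proof. by rewrite !rhoRE /= islinZ // scalerBr scaler_sumr. Qed.

Lemma delta1f_sum (I : Type) (s : seq I) (P : pred I) (F : I -> seq G -> W) Z :
  delta1f (fun Z' => \sum_(i <- s | P i) F i Z') Z = \sum_(i <- s | P i) delta1f (F i) Z.
Proof.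
rewrite /delta1f /= big_split /=; congr (_ + _).
  under eq_bigr => k _ do rewrite islin_sum // scaler_sumr.
  by rewrite exchange_big.
under eq_bigr => a _ do under eq_bigr => b _ do rewrite scaler_sumr.
under eq_bigr => a _ do rewrite exchange_big.
by rewrite exchange_big.
Qed.

Lemma delta1fZ c f Z : delta1f (fun Z' => c *: f Z') Z = c *: delta1f f Z.
Proof.
rewrite /delta1f /= scalerDr !scaler_sumr; congr (_ + _).
  by apply: eq_bigr => k _; rewrite islinZ // !scalerA mulrC.
apply: eq_bigr => a _; rewrite scaler_sumr; apply: eq_bigr => b _.
by rewrite !scalerA mulrC.
Qed.

Lemma rhoR_cons y f a Z :
  rhoR y f (a :: Z) = rhoR y (fun Z' => f (a :: Z')) Z - f (act CM y a :: Z).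
Proof.
rewrite !rhoRE /= big_nat_recl //=.
by rewrite opprD addrA addrAC.
Qed.

Hypothesis rho01_lin : forall w, islin (fun y => rho01 y w).

Lemma rhoRD y y' f Z : is_altform (size Z) f ->
  rhoR (y + y') f Z = rhoR y f Z + rhoR y' f Z.
Proof.
move=> f_alt; have [f_add _] := f_alt Z erefl.
rewrite !rhoRE (islinD (rho01_lin _)) addrACA -opprD -big_split /=.
congr (_ - _); apply: eq_big_nat => k /andP[_ lt_kZ].
by rewrite (islinD (act_lin CM _)) f_add.
Qed.

Lemma delta1f_cons2 r f a b Z : is_altform r f -> size (a :: Z) = r ->
  delta1f (fun Z' => f (a :: b :: Z')) Z - delta1f f (a :: b :: Z)
  = f (brG CM a b :: Z) + rhoR (mu CM b) (fun Z' => f (a :: Z')) Z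
    - rhoR (mu CM a) (fun Z' => f (b :: Z')) Z.
Proof.
move=> f_alt size_r; rewrite /delta1f /= big_nat_recl // big_nat_recl //.
rewrite (sum_pairs_recl (size Z).+1) (sum_pairs_recl (size Z)) big_nat_recl //=.
have -> : \sum_(0 <= i < size Z) sg i.+2 *: rho01 (mu CM Z`_i) (f (rm [:: a, b & Z] i.+2))
    = \sum_(0 <= k < size Z) sg k *: rho01 (mu CM Z`_k) (f [:: a, b & rm Z k]).
  by apply: eq_bigr => i _; rewrite !sgnS opprK.
have -> : \sum_(0 <= i < size Z) \sum_(0 <= j < size Z | (i < j)%N)
      sg (i.+2 + j.+2) *: f (brG CM Z`_i Z`_j :: rm2 [:: a, b & Z] i.+2 j.+2)
    = \sum_(0 <= i < size Z) \sum_(0 <= j < size Z | (i < j)%N)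
      sg (i + j) *: f [:: a, b, brG CM Z`_i Z`_j & rm2 Z i j].
  apply: eq_big_nat => i /andP[_ lt_iZ]; apply: eq_big_nat_cond => j /andP[_ lt_jZ] lt_ij.
  rewrite /rm2 !rmS_cons (altform_rotate f_alt).
    by congr (_ *: _); apply: sgn_mod2; lia.
  by rewrite -size_r /= size_rm ?size_rm //; lia.
have -> : \sum_(0 <= i < size Z) sg (0 + i.+2) *: f (brG CM a Z`_i :: rm2 [:: a, b & Z] 0 i.+2)
    = - \sum_(0 <= c < size Z) f (b :: set_nth 0 Z c (act CM (mu CM a) Z`_c)).
  rewrite -sumrN; apply: eq_big_nat => c /andP[_ lt_cZ].
  rewrite /rm2 !rmS_cons rm0_cons (altform_move_set f_alt) // scalerA -sgnD peiffer.
  by rewrite (@sgn_mod2 _ _ 1) ?scaleN1r //; lia.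
have -> : \sum_(0 <= i < size Z) sg (1 + i.+2) *: f (brG CM b Z`_i :: rm2 [:: a, b & Z] 1 i.+2)
    = \sum_(0 <= c < size Z) f (a :: set_nth 0 Z c (act CM (mu CM b) Z`_c)).
  apply: eq_big_nat => c /andP[_ lt_cZ].
  rewrite /rm2 !rmS_cons rm0_cons (altform_move_set f_alt) // scalerA -sgnD peiffer.
  by rewrite (@sgn_mod2 _ _ 0) ?scale1r //; lia.
rewrite !rhoRE /= rm0_cons /rm2 rmS_cons !rm0_cons sgn0 sgnS sgn0 !scale1r !scaleN1r.
by rewrite !opprD !opprK !addrA (ACl ((1*5)*(2*9)*6*4*8*3*7)) /= !subrr !add0r.
Qed.

End FormOperators.

(** * Delta^2 = -(Delta_2 partial + partial Delta_2) *)

Section CochainOperators.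
Variables (K : fieldType) (G H W : lmodType K) (CM : crossed_module G H).
Local Notation sg := (sgn K).
Local Notation gel := (gel G H).
Local Notation gel0 := (gel0 G H).
Local Notation cochain := (cochain G H W).
Implicit Types (om : cochain) (Xi : seq gel) (Z : seq G).

Lemma cochain_altform p q r om L : is_cochain p q r om ->
  size L = q -> all (gel_size p) L -> is_altform r (om L).
Proof.
move=> om_coch size_L L_p Z size_Z; have [_ om_add _ om_rep] := om_coch L Z size_L L_p size_Z.
by split=> [k x x' lt_kr|]; [have := om_add k 1 x x' lt_kr; rewrite !scale1r | exact: om_rep].
Qed.

Lemma DeltaE om Xi Z : Delta om Xi Z =
  \sum_(0 <= j < size Xi) sg j *: om (map face0 (rm Xi j)) (gx0 (nth gel0 Xi j) :: Z).
Proof. by rewrite /Delta big_mkord. Qed.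

Lemma Delta2E om Xi Z : Delta2 om Xi Z =
  \sum_(0 <= m < size Xi) \sum_(0 <= n < size Xi | (m < n)%N) sg (m + n) *:
     om (map face0 (rm2 Xi m n)) (gx0 (nth gel0 Xi m) :: gx0 (nth gel0 Xi n) :: Z).
Proof. by rewrite /Delta2 big_mkord; apply: eq_bigr => m _; rewrite big_mkord. Qed.

Lemma dpartialE p om Xi Z :
  dpartial CM p om Xi Z = \sum_(0 <= k < p.+2) sg k *: om (map (face CM p k) Xi) Z.
Proof. by rewrite /dpartial big_mkord. Qed.

Lemma nth_map_face0 Xi i : nth gel0 (map face0 Xi) i = face0 (nth gel0 Xi i).
Proof. by elim: Xi i => [|a Xi IH] [|i] //=. Qed.

Lemma Delta_Delta_pairs N om Xi Z : size Xi = N.+1 ->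
  Delta (Delta om) Xi Z =
  \sum_(0 <= m < N.+1) \sum_(0 <= n < N.+1 | (m < n)%N) sg (m + n) *:
    (om (map face0 (map face0 (rm2 Xi m n))) (gx1 (nth gel0 Xi m) :: gx0 (nth gel0 Xi n) :: Z)
     - om (map face0 (map face0 (rm2 Xi m n))) (gx1 (nth gel0 Xi n) :: gx0 (nth gel0 Xi m) :: Z)).
Proof.
move=> size_Xi; pose F j k := om (map face0 (map face0 (rm (rm Xi j) (unbump j k))))
                              (gx1 (nth gel0 Xi k) :: gx0 (nth gel0 Xi j) :: Z).
transitivity (\sum_(0 <= j < N.+1) sg j *: \sum_(0 <= i < N) sg i *: F j (bump j i)).
  rewrite DeltaE size_Xi; apply: eq_big_nat => j /andP[_ lt_jN].
  rewrite DeltaE size_map size_rm size_Xi //; congr (_ *: _); apply: eq_bigr => i _.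
  by rewrite /F bumpK -map_rm nth_map_face0 nth_rm /= nth_behead.
rewrite sum_sgn_bump; apply: eq_bigr => m _; apply: eq_big_nat_cond => n _ lt_mn.
by rewrite /F rm2_unbumpl // rm2_unbumpr.
Qed.

Lemma Delta2_dpartial_pairs p om Xi Z : all (gel_size p.+2) Xi ->
  Delta2 (dpartial CM p om) Xi Z + dpartial CM p.+1 (Delta2 om) Xi Z =
  \sum_(0 <= m < size Xi) \sum_(0 <= n < size Xi | (m < n)%N) sg (m + n) *:
    let L := map face0 (map face0 (rm2 Xi m n)) in
    let a := nth gel0 Xi m in let b := nth gel0 Xi n in
    om L (gx0 a :: gx0 b :: Z) + om L (gx1 a :: gx1 b :: Z)
    - om L ((gx0 a + gx1 a) :: (gx0 b + gx1 b) :: Z).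
Proof.
move=> Xi_p; have Xi_nth i : (i < size Xi)%N -> gel_size p.+2 (nth gel0 Xi i).
  by move=> lt_iXi; apply: (all_nthP gel0 Xi_p).
pose F1 m n k := om (map (face CM p k) (map face0 (rm2 Xi m n)))
                   (gx0 (nth gel0 Xi m) :: gx0 (nth gel0 Xi n) :: Z).
pose F2 m n k := om (map face0 (map (face CM p.+1 k) (rm2 Xi m n)))
    (gx0 (face CM p.+1 k (nth gel0 Xi m)) :: gx0 (face CM p.+1 k (nth gel0 Xi n)) :: Z).
transitivity (\sum_(0 <= m < size Xi) \sum_(0 <= n < size Xi | (m < n)%N) sg (m + n) *:
    (\sum_(0 <= k < p.+2) sg k *: F1 m n k + \sum_(0 <= k < p.+3) sg k *: F2 m n k)).
  under [RHS]eq_bigr => m _ do under eq_bigr => n _ do rewrite scalerDr.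
  under [RHS]eq_bigr => m _ do rewrite big_split /=.
  rewrite big_split /=; congr (_ + _).
    by rewrite Delta2E; apply: eq_bigr => m _; apply: eq_bigr => n _; rewrite dpartialE.
  rewrite dpartialE -exchange_sum_pairs; apply: eq_bigr => k _.
  rewrite Delta2E size_map; congr (_ *: _).
  apply: eq_big_nat => m /andP[_ lt_mXi]; apply: eq_big_nat_cond => n /andP[_ lt_nXi] _.
  by rewrite /F2 -map_rm2 !(nth_map gel0).
apply: eq_big_nat => m /andP[_ lt_mXi]; apply: eq_big_nat_cond => n /andP[_ lt_nXi] lt_mn.
congr (_ *: _).
have L_p : all (gel_size p.+2) (rm2 Xi m n) by apply: all_rm2.
rewrite (@sum_sgn_shift_cancel _ _ p.+1 (F1 m n) (F2 m n)) => [|k lt_kp]; last first.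
  rewrite /F1 /F2 !gx0_face ?Xi_nth //; try lia.
  rewrite -!map_comp; congr (om _ _); apply: (eq_map_all L_p) => a a_p /=.
  by rewrite face0_faceS //; lia.
rewrite /F1 /F2 !gx0_face ?Xi_nth //= -!map_comp; congr (_ - om _ _).
by apply: (eq_map_all L_p) => a a_p /=; rewrite face0_face1.
Qed.

Lemma Delta_Delta p q r om Xi Z : is_cochain p q r om -> (1 < r)%N ->
  size Xi = q.+2 -> all (gel_size p.+2) Xi -> size Z = (r - 2)%N ->
  Delta (Delta om) Xi Z = - (Delta2 (dpartial CM p om) Xi Z + dpartial CM p.+1 (Delta2 om) Xi Z).
Proof.
move=> om_coch lt1r size_Xi Xi_p size_Z.
rewrite (Delta_Delta_pairs _ _ size_Xi) Delta2_dpartial_pairs // size_Xi -sumrN.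
apply: eq_big_nat => m /andP[_ lt_mXi]; rewrite -sumrN.
apply: eq_big_nat_cond => n /andP[_ lt_nXi] lt_mn; rewrite /= -scalerN; congr (_ *: _).
set L := map face0 _.
have L_alt : is_altform r (om L).
  apply: (cochain_altform om_coch); first by rewrite !size_map size_rm2 ?size_Xi.
  rewrite !all_map; apply: sub_all (all_rm2 m n Xi_p) => a /=.
  by move/gel_size_face0/gel_size_face0.
have size_r x y : size (x :: y :: Z) = r by rewrite /= size_Z; lia.
set a := nth gel0 Xi m; set b := nth gel0 Xi n.
have swap_ba : om L [:: gx1 b, gx0 a & Z] = - om L [:: gx0 a, gx1 b & Z].
  exact: (altform_swap L_alt (P := [::]) (size_r _ _)).
by rewrite (altform_cross L_alt) // swap_ba !opprK addrC.
Qed.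

End CochainOperators.

(** * delta Delta + Delta delta = delta_(1) Delta_2 - Delta_2 delta_(1) *)

Section DeltaDelta.
Variables (K : fieldType) (G H W : lmodType K) (CM : crossed_module G H).
Variable rho01 : H -> W -> W.
Hypothesis rho01_linw : forall y, islin (rho01 y).
Local Notation sg := (sgn K).
Local Notation gel := (gel G H).
Local Notation gel0 := (gel0 G H).
Local Notation cochain := (cochain G H W).
Local Notation rhoR := (rhoR CM rho01).
Local Notation delta := (delta CM rho01).
Lemma deltaE (om : cochain) (Xi : seq gel) (Z : seq G) : delta om Xi Z =
  \sum_(0 <= j < size Xi) sg j *: rhoR (that CM (nth gel0 Xi j)) (om (rm Xi j)) Z
  + \sum_(0 <= m < size Xi) \sum_(0 <= n < size Xi | (m < n)%N) sg (m + n) *: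
      om (gbr CM (nth gel0 Xi m) (nth gel0 Xi n) :: rm2 Xi m n) Z.
Proof.
rewrite /Defs.delta big_mkord; congr (_ + _).
by rewrite big_mkord; apply: eq_bigr => m _; rewrite big_mkord.
Qed.

Variables (om : cochain) (Xi : seq gel) (Z : seq G).
Local Notation xi := (nth gel0 Xi).

(* partial_0 Xi(j, k); the position [k] refers to Xi, hence is unbumped past [j]. *)
Definition drop2 j k := map face0 (rm (rm Xi j) (unbump j k)).

(* The summands of delta (Delta om) and Delta (delta om) indexed by the ordered pair (j, k):
   [xi j] feeds rho^(r) and the first entry of [xi k] goes to a g-slot, or vice versa.
   [bracket_term] collects the summands of both containing [gbr] of two faces. *)
Definition delta_rho_term j k :=
  rhoR (that CM (xi j)) (fun Z' => om (drop2 j k) (gx0 (xi k) :: Z')) Z.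

Definition Delta_rho_term j k :=
  rhoR (that CM (face0 (xi k))) (om (drop2 j k)) (gx0 (xi j) :: Z).

Definition bracket_term m n k :=
  om (gbr CM (face0 (xi m)) (face0 (xi n)) :: map face0 (rm (rm2 Xi m n) (unbump m (unbump n k))))
     (gx0 (xi k) :: Z).

Lemma delta_Delta_pairs N : size Xi = N.+2 ->
  delta (Delta om) Xi Z =
  \sum_(0 <= m < N.+2) \sum_(0 <= n < N.+2 | (m < n)%N) sg (m + n) *:
     (delta_rho_term n m - delta_rho_term m n)
  + (\sum_(0 <= m < N.+2) \sum_(0 <= n < N.+2 | (m < n)%N) sg (m + n) *:
       om (map face0 (rm2 Xi m n)) (gx0 (gbr CM (xi m) (xi n)) :: Z)
     + \sum_(0 <= m < N.+2) \sum_(0 <= n < N.+2 | (m < n)%N) sg (m + n) *: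
       \sum_(0 <= i < N) sg i.+1 *: bracket_term m n (bump n (bump m i))).
Proof.
move=> size_Xi; rewrite deltaE size_Xi -sum_sgn_bump; congr (_ + _).
  apply: eq_big_nat => j /andP[_ lt_jN]; congr (_ *: _).
  rewrite /Delta (rhoR_sum CM rho01_linw).
  rewrite big_mkord size_rm size_Xi //=; apply: eq_bigr => i _.
  rewrite (rhoRZ CM rho01_linw).
  by rewrite /delta_rho_term /drop2 bumpK nth_rm.
rewrite -big_split; apply: eq_big_nat => m /andP[_ lt_mN].
rewrite -big_split; apply: eq_big_nat_cond => n /andP[_ lt_nN] lt_mn /=.
rewrite -scalerDr; congr (_ *: _).
rewrite DeltaE /= size_rm2 ?size_Xi // big_nat_recl // rm0_cons sgn0 scale1r; congr (_ + _).
apply: eq_bigr => i _; rewrite rmS_cons /= face0_gbr /bracket_term !bumpK.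
by rewrite /rm2 !nth_rm.
Qed.

Lemma Delta_delta_pairs N : size Xi = N.+2 ->
  Delta (delta om) Xi Z =
  \sum_(0 <= m < N.+2) \sum_(0 <= n < N.+2 | (m < n)%N) sg (m + n) *:
     (Delta_rho_term n m - Delta_rho_term m n)
  + \sum_(0 <= k < N.+2) sg k *: \sum_(0 <= m < N.+1) \sum_(0 <= n < N.+1 | (m < n)%N)
       sg (m + n) *: bracket_term (bump k m) (bump k n) k.
Proof.
move=> size_Xi; rewrite DeltaE size_Xi -sum_sgn_bump -big_split.
apply: eq_big_nat => k /andP[_ lt_kN] /=; rewrite -scalerDr; congr (_ *: _).
rewrite deltaE size_map size_rm size_Xi //=; congr (_ + _).
  apply: eq_bigr => j _; congr (_ *: _).
  by rewrite /Delta_rho_term /drop2 bumpK nth_map_face0 nth_rm -!map_rm.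
apply: eq_bigr => m _; apply: eq_big_nat_cond => n /andP[_ lt_nN] lt_mn; congr (_ *: _).
rewrite !nth_map_face0 !nth_rm -map_rm2 /bracket_term (rm_rm2_bump gel0) //.
all: by rewrite size_Xi.
Qed.

Hypothesis rho01_lin : forall w, islin (fun y => rho01 y w).

Lemma delta_Delta_pair_terms m n : (m < n)%N -> (n < size Xi)%N ->
  (0 < size (gx (xi m)))%N -> (0 < size (gx (xi n)))%N ->
  is_altform (size Z).+1 (om (map face0 (rm2 Xi m n))) ->
  let L := map face0 (rm2 Xi m n) in let a := gx0 (xi m) in let b := gx0 (xi n) in
  (delta_rho_term n m - delta_rho_term m n) + om L (gx0 (gbr CM (xi m) (xi n)) :: Z)
    + (Delta_rho_term n m - Delta_rho_term m n)
  = om L (brG CM a b :: Z) + rhoR (mu CM b) (fun Z' => om L (a :: Z')) Z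
    - rhoR (mu CM a) (fun Z' => om L (b :: Z')) Z.
Proof.
move=> lt_mn lt_nXi gt0_m gt0_n L_alt L a b.
have L_alt1 x : is_altform (size Z) (fun Z' => om L (x :: Z')) by apply: altform_cons.
rewrite /delta_rho_term /Delta_rho_term /drop2 rm2_unbumpl // rm2_unbumpr // -/L.
rewrite (that_face0 CM gt0_m) (that_face0 CM gt0_n) gx0_gbr // -/a -/b.
set tm := that CM (face0 (xi m)); set tn := that CM (face0 (xi n)).
rewrite (rhoRD CM rho01_lin tn) // (rhoRD CM rho01_lin tm) // !rhoR_cons.
rewrite (altformB L_alt (P := [::])) // (altformD L_alt (P := [::])) //= -/L.
move: (rhoR tn _ Z) (rhoR tm _ Z) (rhoR (mu CM b) _ Z) (rhoR (mu CM a) _ Z) => pn pm mb ma.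
move: (om L (brG CM a b :: Z)) (om L (act CM tm b :: Z)) (om L (act CM tn a :: Z)) => f0 sm sn.
by rewrite !opprD !opprK !addrA (ACl ((1*10)*(8*3)*(6*9)*(11*7)*5*2*4)) /= !subrr !add0r.
Qed.

Lemma delta1_Delta2_pairs :
  (forall m n, (m < n < size Xi)%N -> is_altform (size Z).+1 (om (map face0 (rm2 Xi m n)))) ->
  delta1 CM rho01 (Delta2 om) Xi Z - Delta2 (delta1 CM rho01 om) Xi Z =
  \sum_(0 <= m < size Xi) \sum_(0 <= n < size Xi | (m < n)%N) sg (m + n) *:
    let L := map face0 (rm2 Xi m n) in let a := gx0 (xi m) in let b := gx0 (xi n) in
    om L (brG CM a b :: Z) + rhoR (mu CM b) (fun Z' => om L (a :: Z')) Z
    - rhoR (mu CM a) (fun Z' => om L (b :: Z')) Z.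
Proof.
move=> L_alt; rewrite delta1E /Delta2 (delta1f_sum CM rho01_linw).
under eq_bigr => m _ do rewrite (delta1f_sum CM rho01_linw).
under eq_bigr => m _ do under eq_bigr => n _ do rewrite (delta1fZ CM rho01_linw).
rewrite -sumrB big_mkord; apply: eq_bigr => m _; rewrite -sumrB big_mkord.
apply: eq_bigr => n lt_mn; rewrite -scalerBr delta1E (delta1f_cons2 CM rho01 _ (L_alt m n _)) //.
by rewrite lt_mn ltn_ord.
Qed.

Lemma delta_Delta_add_Delta_delta p q r : is_cochain p q r om ->
  size Xi = q.+2 -> all (gel_size p.+1) Xi -> size Z = r.-1 -> (0 < r)%N ->
  delta (Delta om) Xi Z + Delta (delta om) Xi Z
  = delta1 CM rho01 (Delta2 om) Xi Z - Delta2 (delta1 CM rho01 om) Xi Z.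
Proof.
move=> om_coch size_Xi Xi_p size_Z gt0_r.
have xi_p i : (i < size Xi)%N -> gel_size p.+1 (xi i) by move=> lt_i; apply: (all_nthP gel0 Xi_p).
have gt0_xi i : (i < size Xi)%N -> (0 < size (gx (xi i)))%N by move/xi_p/eqP->.
have L_alt m n : (m < n < size Xi)%N -> is_altform (size Z).+1 (om (map face0 (rm2 Xi m n))).
  case/andP=> lt_mn lt_nXi; rewrite size_Z prednK //; apply: (cochain_altform om_coch); last first.
    by rewrite all_map; apply: sub_all (all_rm2 m n Xi_p) => a /gel_size_face0.
  by rewrite size_map size_rm2 // size_Xi.
rewrite (delta_Delta_pairs size_Xi) (Delta_delta_pairs size_Xi) (delta1_Delta2_pairs L_alt).
rewrite !addrA [LHS](ACl ((1*2*4)*(3*5))) /= sum_sgn_triples_cancel addr0 size_Xi.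
rewrite -!big_split; apply: eq_big_nat => m /andP[_ lt_mXi].
rewrite -!big_split; apply: eq_big_nat_cond => n /andP[_ lt_nXi] lt_mn /=.
rewrite -!scalerDr delta_Delta_pair_terms ?gt0_xi ?size_Xi //.
by apply: L_alt; rewrite lt_mn size_Xi.
Qed.

End DeltaDelta.

Theorem mainTheorem14 (K : fieldType) (G H : lmodType K) (CM : crossed_module G H)
    (V W : lmodType K) (phi : W -> V) (phi_lin : islin phi)
    (rho : two_rep CM phi) (p q r : nat) (hr : (2 < r)%N)
    (om : cochain G H W) (hom : is_cochain p q r om) :
  (forall (Xi : seq (gel G H)) (Z : seq G),
     size Xi = q.+2 -> all (gel_size p.+1) Xi -> size Z = r.-1 ->
     delta CM (rho01 rho) (Delta om) Xi Z + Delta (delta CM (rho01 rho) om) Xi Z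
     = delta1 CM (rho01 rho) (Delta2 om) Xi Z - Delta2 (delta1 CM (rho01 rho) om) Xi Z)
  /\
  (forall (Xi : seq (gel G H)) (Z : seq G),
     size Xi = q.+2 -> all (gel_size p.+2) Xi -> size Z = (r - 2)%N ->
     Delta (Delta om) Xi Z
     = - (Delta2 (dpartial CM p om) Xi Z + dpartial CM p.+1 (Delta2 om) Xi Z)).
Proof.
split=> Xi Z size_Xi Xi_p size_Z.
  apply: (delta_Delta_add_Delta_delta CM (rho01_linw rho) (rho01_lin rho) hom) => //.
  by apply: ltn_trans hr.
by apply: (Delta_Delta CM hom) => //; apply: ltnW.
Qed.
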